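(* Let $n$ be a positive integer, $B=\{x\in\mathbb{R}^n:\|x\|_2\le1\}$, $\mathcal{U}$ the uniform distribution on $B$, and $p$ the distribution on $\mathbb{R}^n$ that with probability $1/2$ draws $Z\sim\mathcal{U}$ and with probability $1/2$ draws a uniformly random element of $\{\pm e_1,\dots,\pm e_n\}$ (the signed standard basis vectors). Let $\lambda>0$, $k$ a positive integer, $\delta\in(0,1]$, $\sigma\in(0,1]$, let $d_{t-1}\in\mathbb{R}^n$ be any fixed vector, and let $\Phi_{t-1}=\mathbb{E}_{W\sim p}[\cosh(\lambda d_{t-1}^\top W)]$. If $X_t$ is sampled from an arbitrary $\sigma$-smooth distribution on $B$, then $$\Pr_{X_t}\!\left[\lambda d_{t-1}^\top X_t\ge 4\ln\!\left(\frac{4k\Phi_{t-1}}{\delta}\right)\right]\le(1-\sigma)^k+\delta.$$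
   Context: A distribution $\mu$ on $B$ is $\sigma$-smooth if $\mu(A)\le\mathcal{U}(A)/\sigma$ for all measurable $A\subseteq B$. *)

From HB Require Import structures.
From mathcomp Require Import all_boot all_order all_algebra.
From mathcomp Require Import all_classical all_reals all_analysis.

Set Implicit Arguments.
Unset Strict Implicit.
Unset Printing Implicit Defensive.
Import Order.TTheory GRing.Theory Num.Theory.
Local Open Scope classical_set_scope.
Local Open Scope ring_scope.

Section defs.
Variables (R : realType) (n : nat).

(* R^n is represented by n.-tuple R, with its (product = Borel) sigma-algebra *)
Definition dotp (x y : n.-tuple R) : R := \sum_(i < n) tnth x i * tnth y i.

Definition norm2 (x : n.-tuple R) : R := Num.sqrt (dotp x x).

Definition unit_ball : set (n.-tuple R) := [set x | norm2 x <= 1].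

Definition box (a b : n.-tuple R) : set (n.-tuple R) :=
  [set x | forall i : 'I_n, tnth a i <= tnth x i <= tnth b i].

(* leb is the n-dimensional Lebesgue measure: it gives every closed box its
   volume (this determines a measure on the Borel sets uniquely). *)
Definition is_lebesgue_n (leb : set (n.-tuple R) -> \bar R) : Prop :=
  forall a b : n.-tuple R,
    leb (box a b) = (\prod_(i < n) Num.max (tnth b i - tnth a i) 0)%:E.

Definition unifB (leb : set (n.-tuple R) -> \bar R) (A : set (n.-tuple R)) : \bar R :=
  (leb (A `&` unit_ball) * ((fine (leb unit_ball))^-1)%:E)%E.

Definition pbasis (i : 'I_n) : n.-tuple R :=
  [tuple (if j == i then 1 else 0) | j < n].
Definition nbasis (i : 'I_n) : n.-tuple R :=
  [tuple (if j == i then -1 else 0) | j < n].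

Definition signed_basis_law (A : set (n.-tuple R)) : \bar R :=
  ((2 * n%:R)^-1 * \sum_(i < n) (\1_A (pbasis i) + \1_A (nbasis i)))%:E.

Definition is_mixture_p (leb : set (n.-tuple R) -> \bar R)
    (p : set (n.-tuple R) -> \bar R) : Prop :=
  forall A, measurable A ->
    p A = ((2^-1)%:E * unifB leb A + (2^-1)%:E * signed_basis_law A)%E.

Definition sigma_smooth (leb : set (n.-tuple R) -> \bar R) (sigma : R)
    (mu : set (n.-tuple R) -> \bar R) : Prop :=
  forall A, measurable A -> A `<=` unit_ball ->
    (mu A <= unifB leb A * (sigma^-1)%:E)%E.

Definition cosh (x : R) : R := (expR x + expR (- x)) / 2.

End defs.

From HB Require Import structures.
From mathcomp Require Import all_boot all_order all_algebra.
From mathcomp Require Import all_classical all_reals all_analysis.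
From mathcomp Require Import ring lra.
From mathcomp Require Import measurable_realfun.
Set Implicit Arguments.
Unset Strict Implicit.
Unset Printing Implicit Defensive.
Import Order.TTheory GRing.Theory Num.Theory.
Local Open Scope classical_set_scope.
Local Open Scope ring_scope.

(* Write S for the event and x = 4 k Phi / delta, so that the threshold is
   4 ln x.  Since cosh z >= e^z / 2, Markov's inequality gives
   p(S) <= 2 Phi / x^4.  The mixture p puts mass at least U(S) / 2 on S, and
   mu, which lives on the ball, has mu(S) <= U(S) / sigma; hence
   mu(S) sigma x^4 <= 4 Phi.  If k sigma <= delta, Bernoulli's inequality
   gives (1 - sigma)^k >= 1 - delta.  Otherwise 1 / sigma < k / delta and the
   bound becomes mu(S) <= 1 / x^3 <= delta.  Phi is a genuine (finite) value
   because p is carried by the ball, where cosh (lam d.w) is bounded. *)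

Lemma bernoulli_inequality (R : realDomainType) (s : R) (k : nat) :
  s <= 1 -> 1 - k%:R * s <= (1 - s) ^+ k.
Proof.
move=> s1; elim: k => [|k IH]; first by rewrite mul0r subr0 expr0.
have : 0 <= (1 - s) * ((1 - s) ^+ k - (1 - k%:R * s)) by apply: mulr_ge0; lra.
have : 0 <= k%:R * (s * s) by rewrite mulr_ge0 // -expr2 sqr_ge0.
rewrite exprS -natr1; nra.
Qed.

Lemma smooth_tail_arith (R : realFieldType) (k : nat) (delta sigma Phi m P : R) :
  (0 < k)%N -> 0 < delta <= 1 -> 0 < sigma <= 1 -> 1 <= Phi -> 0 <= m <= 1 ->
  m <= 2 / sigma * P -> (4 * k%:R * Phi / delta) ^+ 4 / 2 * P <= Phi ->
  m <= (1 - sigma) ^+ k + delta.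
Proof.
move=> k0 /andP[d0 d1] /andP[s0 s1] Phi1 /andP[m0 m1] mP.
have k1 : 1 <= k%:R :> R by rewrite ler1n.
set x := 4 * k%:R * Phi / delta => xP.
have x_delta : x * delta = 4 * k%:R * Phi by rewrite divfK ?gt_eqF.
have x4 : 4 <= x by nra.
have x0 : 0 < x by apply: lt_le_trans x4.
have m_sigma : m * sigma * x ^+ 4 <= 4 * Phi.
  rewrite mulrAC ler_pdivlMr // in mP.
  have := exprn_ge0 4 (ltW x0); nra.
have [ks_le|ks_gt] := lerP (k%:R * sigma) delta.
  by have := bernoulli_inequality k s1; lra.
suff m_delta : m <= delta.
  have : 0 <= (1 - sigma) ^+ k by rewrite exprn_ge0 // subr_ge0.
  lra.
have m_x4 : m * delta * x ^+ 4 <= x * delta.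
  rewrite x_delta; have := exprn_ge0 4 (ltW x0); nra.
have m_x3 : m * x ^+ 3 <= 1.
  rewrite -(ler_pM2r (mulr_gt0 x0 d0)) mul1r.
  by have -> : m * x ^+ 3 * (x * delta) = m * delta * x ^+ 4 by ring.
have : m * x <= 1 by rewrite exprS expr2 in m_x3; nra.
nra.
Qed.

Section cosh.
Variable R : realType.

Lemma cosh_ge1 (z : R) : 1 <= cosh z.
Proof.
have := expRxMexpNx_1 z; have := expR_gt0 z; have := sqr_ge0 (expR z - 1).
rewrite /cosh expr2; nra.
Qed.

Lemma expR_half_le_cosh (z : R) : expR z / 2 <= cosh z.
Proof. by have := expR_gt0 (- z); rewrite /cosh; lra. Qed.

Lemma cosh_le_expR_norm (z : R) : cosh z <= expR `|z|.
Proof.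
have : expR z <= expR `|z| by rewrite ler_expR ler_norm.
have : expR (- z) <= expR `|z| by rewrite ler_expR -normrN ler_norm.
rewrite /cosh; lra.
Qed.

Lemma measurable_cosh : measurable_fun setT (@cosh R).
Proof.
apply: measurable_funM => //; apply: measurable_funD; first exact: measurable_expR.
by apply: measurableT_comp => //; exact: measurable_expR.
Qed.

End cosh.

Lemma markov_set d (T : measurableType d) (R : realType)
    (mu : {measure set T -> \bar R}) (S : set T) (f : T -> R) (t : R) :
  measurable S -> measurable_fun setT f -> (forall x, 0 <= f x) -> 0 <= t ->
  (forall x, S x -> t <= f x) ->
  (t%:E * mu S <= \int[mu]_x (f x)%:E)%E.
Proof.
move=> mS mf f0 t0 tf; rewrite -integral_cst //.
apply: le_trans (ge0_subset_integral mu mS measurableT _ _ (subsetT S)) => //.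
- apply: ge0_le_integral => //=; exact/measurable_EFinP/measurable_funTS.
- exact/measurable_EFinP.
- by move=> x _; rewrite lee_fin.
Qed.

Section integral_cosh.
Context d (T : measurableType d) (R : realType) (P : probability T R).
Variable g : T -> R.
Hypothesis mg : measurable_fun setT g.
Local Open Scope ereal_scope.

Let mcoshg : measurable_fun setT (fun x => cosh (g x)).
Proof. exact: measurableT_comp (@measurable_cosh R) mg. Qed.

Lemma integral_cosh_ge1 : 1 <= \int[P]_x (cosh (g x))%:E.
Proof.
rewrite -[X in X <= _](probability_setT P) -[X in X <= _]mul1e -integral_cst //.
apply: ge0_le_integral => //= [|x _]; first exact/measurable_EFinP.
by rewrite lee_fin cosh_ge1.
Qed.

Lemma integral_cosh_fin_num (M : R) :
  (\forall x \ae P, `|g x| <= M)%R -> \int[P]_x (cosh (g x))%:E \is a fin_num.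
Proof.
move=> gM; rewrite ge0_fin_numE ?(le_trans lee01 integral_cosh_ge1) //.
apply: le_lt_trans (ltry (expR M)).
rewrite -[X in _ <= X]mule1 -(probability_setT P) -integral_cst //.
apply: ae_ge0_le_integral => //= [x _||].
- by rewrite lee_fin (le_trans ler01) ?cosh_ge1.
- exact/measurable_EFinP.
apply: filterS gM => x gxM _; rewrite lee_fin (le_trans (cosh_le_expR_norm _)) //.
by rewrite ler_expR.
Qed.

Lemma cosh_markov (t : R) :
  (expR t / 2)%:E * P [set x | (t <= g x)%R] <= \int[P]_x (cosh (g x))%:E.
Proof.
apply: markov_set => // [|x|x /= tg].
- by rewrite -[X in measurable X]setTI; apply: measurable_fun_le.
- by rewrite (le_trans ler01) ?cosh_ge1.
- by rewrite (le_trans _ (expR_half_le_cosh _)) // ler_pM2r // ler_expR.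
Qed.

End integral_cosh.

Section unit_ball.
Variables (R : realType) (n : nat).
Implicit Types x y : n.-tuple R.

Lemma measurable_dotp y : measurable_fun setT (dotp y).
Proof.
apply: measurable_sum => i.
by apply: measurable_funM => //; exact: measurable_tnth.
Qed.

Lemma unit_ballE x : unit_ball x = (dotp x x <= 1).
Proof. by rewrite /unit_ball /norm2 /= -[in LHS]sqrtr1 ler_sqrt. Qed.

Lemma measurable_unit_ball : measurable (@unit_ball R n).
Proof.
have -> : @unit_ball R n = setT `&` [set x | dotp x x <= cst 1 x].
  by apply/funext => x; rewrite setTI /= unit_ballE.
apply: measurable_fun_le => //.
by apply: measurable_sum => i; apply: measurable_funM; exact: measurable_tnth.
Qed.

Lemma sqr_tnth_le_dotp x i : tnth x i ^+ 2 <= dotp x x.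
Proof.
rewrite /dotp (bigD1 i) //= -expr2 lerDl.
by apply: sumr_ge0 => j _; rewrite -expr2 sqr_ge0.
Qed.

Lemma unit_ball_norm_tnth_le1 x i : unit_ball x -> `|tnth x i| <= 1.
Proof.
rewrite unit_ballE => /(le_trans (sqr_tnth_le_dotp x i)) x2.
by rewrite -(expr_le1 (n := 2)) // real_normK ?num_real.
Qed.

Lemma unit_ball_norm_dotp_le y x :
  unit_ball x -> `|dotp y x| <= \sum_(i < n) `|tnth y i|.
Proof.
move=> Bx; apply: le_trans (ler_norm_sum _ _ _) _.
apply: ler_sum => i _; rewrite normrM ler_piMr //.
exact: unit_ball_norm_tnth_le1.
Qed.

Lemma pbasis_unit_ball (i : 'I_n) : unit_ball (pbasis R i).
Proof.
rewrite unit_ballE /dotp (bigD1 i) //= big1 => [|j ji]; rewrite !tnth_mktuple.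
  by rewrite eqxx mulr1 addr0.
by rewrite (negbTE ji) mulr0.
Qed.

Lemma nbasis_unit_ball (i : 'I_n) : unit_ball (nbasis R i).
Proof.
rewrite unit_ballE /dotp (bigD1 i) //= big1 => [|j ji]; rewrite !tnth_mktuple.
  by rewrite eqxx mulrNN mulr1 addr0.
by rewrite (negbTE ji) mulr0.
Qed.

End unit_ball.

Lemma probability_setI_full d (T : measurableType d) (R : realType)
    (P : probability T R) (A B : set T) :
  measurable A -> measurable B -> P B = 1%E -> P (A `&` B) = P A.
Proof.
move=> mA mB PB1; rewrite [RHS](measureDI P mA mB) -[LHS]add0e.
congr (_ + _)%E; apply/esym/eqP; rewrite eq_le measure_ge0 andbT.
have PBc0 : P (~` B) = 0%E by rewrite probability_setC // PB1 subee.
rewrite -PBc0.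
by apply: le_measure; rewrite ?inE; [exact: measurableD | exact: measurableC | move=> x []].
Qed.

Section mixture.
Variables (R : realType) (n : nat) (leb : {measure set (n.-tuple R) -> \bar R}).
Implicit Types A : set (n.-tuple R).
Local Open Scope ereal_scope.

Lemma unifB_setIl A : unifB leb (A `&` @unit_ball R n) = unifB leb A.
Proof. by rewrite /unifB -setIA setIid. Qed.

Lemma signed_basis_law_ge0 A : 0 <= signed_basis_law A.
Proof.
rewrite lee_fin mulr_ge0 ?invr_ge0 ?mulr_ge0 //.
by apply: sumr_ge0 => i _; rewrite addr_ge0.
Qed.

Variable p : probability (n.-tuple R) R.
Hypothesis hp : is_mixture_p leb p.

Lemma mixture_unit_ballC : p (~` @unit_ball R n) = 0.
Proof.
rewrite hp; last by apply: measurableC; exact: measurable_unit_ball.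
rewrite /unifB setICl measure0 mul0e mule0 add0e /signed_basis_law.
rewrite big1 ?mulr0 ?mule0 // => i _.
by rewrite !indicE !in_setC (mem_set (pbasis_unit_ball R i))
  (mem_set (nbasis_unit_ball R i)) addr0.
Qed.

Lemma mixture_ae_unit_ball (Q : n.-tuple R -> Prop) :
  (forall x, unit_ball x -> Q x) -> \forall x \ae p, Q x.
Proof.
move=> BQ; exists (~` @unit_ball R n); split => [||x /= nQx Bx].
- by apply: measurableC; exact: measurable_unit_ball.
- exact: mixture_unit_ballC.
- exact/nQx/BQ.
Qed.

Lemma unifB_le_mixture A : measurable A -> unifB leb A <= 2%:E * p A.
Proof.
move=> mA; rewrite hp //.
apply: le_trans (_ : _ <= 2%:E * ((2^-1)%:E * unifB leb A)) _.
  by rewrite muleA -EFinM mulfV // mul1e.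
by rewrite lee_wpmul2l // leeDl // mule_ge0 // signed_basis_law_ge0.
Qed.

End mixture.

Lemma sigma_smooth_le_mixture (R : realType) (n : nat)
    (leb : {measure set (n.-tuple R) -> \bar R}) (p : probability (n.-tuple R) R)
    (sigma : R) (mu : probability (n.-tuple R) R) :
  is_mixture_p leb p -> 0 < sigma -> mu (@unit_ball R n) = 1%E ->
  sigma_smooth leb sigma mu ->
  forall A, measurable A -> (mu A <= (2 / sigma)%:E * p A)%E.
Proof.
move=> hp s0 muB smooth A mA.
have mB := @measurable_unit_ball R n.
rewrite -(probability_setI_full mA mB muB).
apply: le_trans (smooth _ (measurableI _ _ mA mB) (@subIsetr _ _ _)) _.
rewrite unifB_setIl EFinM [X in (_ <= X)%E]muleAC.
by apply: lee_wpmul2r; [rewrite lee_fin invr_ge0 ltW | exact: unifB_le_mixture].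
Qed.

Theorem mainTheorem6 (R : realType) (n : nat) (hn : (0 < n)%N)
  (leb : {measure set (n.-tuple R) -> \bar R}) (hleb : is_lebesgue_n leb)
  (p : probability (n.-tuple R) R) (hp : is_mixture_p leb p)
  (lam : R) (hlam : 0 < lam) (k : nat) (hk : (0 < k)%N)
  (delta : R) (hdelta : 0 < delta <= 1)
  (sigma : R) (hsigma : 0 < sigma <= 1)
  (d : n.-tuple R)
  (mu : probability (n.-tuple R) R) (hmuB : mu (@unit_ball R n) = 1%E)
  (hsmooth : sigma_smooth leb sigma mu) :
  let Phi := fine (\int[p]_w (cosh (lam * dotp d w))%:E)%E in
  (mu [set x | (4 * ln (4 * k%:R * Phi / delta) <= lam * dotp d x)%R]
     <= ((1 - sigma) ^+ k + delta)%:E)%E.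
Proof.
cbv zeta; set Phi := fine _; set x := 4 * k%:R * Phi / delta.
set S := [set w | _ <= _].
have mg : measurable_fun setT (fun w => lam * dotp d w).
  exact: measurable_funM (measurable_dotp d).
have Phi_fin : (\int[p]_w (cosh (lam * dotp d w))%:E)%E \is a fin_num.
  apply: (@integral_cosh_fin_num _ _ _ _ _ mg (lam * \sum_(i < n) `|tnth d i|)).
  apply: (mixture_ae_unit_ball hp) => w Bw.
  by rewrite normrM gtr0_norm // ler_pM2l // unit_ball_norm_dotp_le.
have Phi_ge1 : 1 <= Phi by rewrite -lee_fin fineK // integral_cosh_ge1.
have x0 : 0 < x.
  case/andP: hdelta => d0 _.
  by rewrite divr_gt0 // !mulr_gt0 ?ltr0n // (lt_le_trans ltr01).
have mS : measurable S by rewrite -[S]setTI; apply: measurable_fun_le.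
have := cosh_markov p mg (4 * ln x).
rewrite expRM_natl lnK ?posrE // -(fineK Phi_fin) -/Phi => markov.
have s0 : 0 < sigma by case/andP: hsigma.
have smooth := sigma_smooth_le_mixture hp s0 hmuB hsmooth mS.
have [m_fin P_fin] := (fin_num_measure mu S mS, fin_num_measure p S mS).
move: smooth markov; rewrite -(fineK m_fin) -(fineK P_fin) -EFinM !lee_fin.
move=> smooth markov; apply: smooth_tail_arith smooth markov => //.
by rewrite fine_ge0 ?measure_ge0 //= -lee_fin fineK // probability_le1.
Qed.
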